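(* Let $\vartheta$ be the random substitution on $\{a,b,c,d\}$ given by $\vartheta(a)=\{ab,ba\}$, $\vartheta(b)=\{cb,bc\}$, $\vartheta(c)=\{ad,da\}$, $\vartheta(d)=\{cd,dc\}$. Then its topological entropy is $s=\log 2$.
   Context: A random substitution on a finite alphabet $\mathcal A$ maps each letter to a finite non-empty set of non-empty words; it is extended to words by $\vartheta(u_1\cdots u_m)=\{w_1\cdots w_m: w_k\in\vartheta(u_k)\}$ and to sets of words by unions; powers $\vartheta^m$ are compositions. The language $\mathcal L$ is the set of all subwords (contiguous factors) of words in $\vartheta^m(a)$, $a\in\mathcal A$, $m\in\mathbb N$; $\mathcal L_\ell$ its words of length $\ell$; the topological entropy is $s=\lim_{\ell\to\infty}\frac1\ell\log\#\mathcal L_\ell$. *)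

From Stdlib Require Import Reals List.
Import ListNotations.
Open Scope R_scope.

Definition rand_subst (A : Type) := A -> list (list A).

Fixpoint subst_word {A : Type} (th : rand_subst A) (u : list A) : list (list A) :=
  match u with
  | [] => [[]]
  | x :: u' => flat_map (fun w => map (fun r => w ++ r) (subst_word th u')) (th x)
  end.

Definition subst_set {A : Type} (th : rand_subst A) (S : list (list A)) : list (list A) :=
  flat_map (subst_word th) S.

Definition subst_pow {A : Type} (th : rand_subst A) (m : nat) (a : A) : list (list A) :=
  Nat.iter m (subst_set th) [[a]].

Definition subword {A : Type} (w v : list A) : Prop :=
  exists p s, v = p ++ w ++ s.

Definition in_language {A : Type} (th : rand_subst A) (w : list A) : Prop :=
  exists (a : A) (m : nat) (v : list A), In v (subst_pow th m a) /\ subword w v.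

Definition lang_card {A : Type} (th : rand_subst A) (l n : nat) : Prop :=
  exists L : list (list A),
    NoDup L /\ (forall w, In w L <-> (in_language th w /\ length w = l)) /\ length L = n.

Definition has_top_entropy {A : Type} (th : rand_subst A) (s : R) : Prop :=
  exists N : nat -> nat,
    (forall l, lang_card th l (N l)) /\
    Un_cv (fun l => ln (INR (N l)) / INR l) s.

Inductive abcd : Type := a | b | c | d.

Definition theta : rand_subst abcd := fun x =>
  match x with
  | a => [[a; b]; [b; a]]
  | b => [[c; b]; [b; c]]
  | c => [[a; d]; [d; a]]
  | d => [[c; d]; [d; c]]
  end.

From Stdlib Require Import Reals List Arith Lia Lra Classical ClassicalEpsilon.
From Coquelicot Require Import Coquelicot.
Import ListNotations.
Open Scope nat_scope.

(* Every image has length 2, every letter has exactly two realisations, and distinct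
   letters have disjoint realisations, so the substitution is recognisable.  Writing
   N(l) = #L_l, three counting estimates follow for any such substitution:
   - N(l+1) <= 4 N(l), since a legal word stays legal when its last letter is dropped;
   - 2^k N(k) <= N(2k), since the 2^k realisations of distinct legal words of length k
     are distinct legal words of length 2k (recognisability);
   - N(l) <= 2^(h+1) N(h) + 2^(h+2) N(h+1) for h = l/2, since by desubstitution every
     legal word of length l is one of two windows of a realisation of a legal word of
     length h or h+1.
   A purely arithmetic induction turns these into 2^l <= N(l) (l+1)^3 and
   N(l) <= 4096 2^l (l+1)^5, and an exponential rate squeezed between polynomial
   corrections gives (1/l) log N(l) -> log 2.  The file develops, in order: list
   lemmas, general facts on random substitutions, the counting estimates, the
   arithmetic growth bounds, the analytic limit, and finally the theorem. *)

Lemma app_inj_length {X : Type} (l1 l2 l3 l4 : list X) :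
  l1 ++ l2 = l3 ++ l4 -> length l1 = length l3 -> l1 = l3 /\ l2 = l4.
Proof.
  revert l3; induction l1 as [|x l1 IH]; intros [|y l3] E Hl; simpl in *; try lia; auto.
  injection E as -> E. destruct (IH l3 E) as [-> ->]; auto.
Qed.

Lemma NoDup_flat_map_disjoint {X Y : Type} (f : X -> list Y) (L : list X) :
  NoDup L -> (forall x, In x L -> NoDup (f x)) ->
  (forall x x' y, In x L -> In x' L -> In y (f x) -> In y (f x') -> x = x') ->
  NoDup (flat_map f L).
Proof.
  induction L as [|x L IH]; intros HL Hf Hdisj; simpl; [constructor|].
  inversion HL as [|? ? Hx HL']; subst.
  apply NoDup_app.
  - apply Hf; simpl; auto.
  - apply IH; auto; [intros; apply Hf | intros x1 x2 y H1 H2; apply Hdisj]; simpl; auto.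
  - intros y Hy Hy'. apply in_flat_map in Hy'. destruct Hy' as (x' & Hx' & Hy').
    assert (x = x') as <- by (apply (Hdisj x x' y); simpl; auto). contradiction.
Qed.

Lemma classical_filter {X : Type} (P : X -> Prop) (S : list X) :
  exists L, NoDup L /\ forall w, In w L <-> In w S /\ P w.
Proof.
  induction S as [|x S [L [HN HL]]].
  - exists []. split; [constructor | simpl; tauto].
  - destruct (classic (P x /\ ~ In x L)) as [[Hp Hn]|Hc].
    + exists (x :: L). split; [constructor; auto|].
      intros w. simpl. rewrite HL. split; [intros [<-|H]; tauto|].
      intros [[<-|H] H']; auto.
    + exists L. split; auto. intros w. rewrite HL. simpl. split; [tauto|].
      intros [[<-|H] H']; auto. apply NNPP. intros Hn. apply Hc. split; auto. rewrite HL. tauto.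
Qed.

Fixpoint words_of_length {X : Type} (alphabet : list X) (l : nat) : list (list X) :=
  match l with
  | O => [[]]
  | S l => flat_map (fun x => map (cons x) (words_of_length alphabet l)) alphabet
  end.

Lemma in_words_of_length {X : Type} (alphabet : list X) (w : list X) :
  (forall x, In x alphabet) -> In w (words_of_length alphabet (length w)).
Proof.
  intros Hfull. induction w as [|x w IH]; simpl; auto.
  apply in_flat_map. exists x. split; auto. apply in_map, IH.
Qed.

Section RandomSubstitution.

Variable A : Type.
Variable th : rand_subst A.

Lemma in_subst_word_cons z u v :
  In v (subst_word th (z :: u)) <->
  exists w r, In w (th z) /\ In r (subst_word th u) /\ v = w ++ r.
Proof.
  simpl. rewrite in_flat_map. split.
  - intros [w [Hw Hv]]. apply in_map_iff in Hv. destruct Hv as [r [<- Hr]]. eauto.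
  - intros (w & r & Hw & Hr & ->). exists w. split; auto. apply in_map. auto.
Qed.

Lemma in_subst_word_app x y v :
  In v (subst_word th (x ++ y)) <->
  exists v1 v2, v = v1 ++ v2 /\ In v1 (subst_word th x) /\ In v2 (subst_word th y).
Proof.
  revert v. induction x as [|z x IH]; intros v; simpl app.
  - split.
    + intros H. exists [], v. simpl. auto.
    + intros (v1 & v2 & -> & [<-|[]] & H2). exact H2.
  - rewrite in_subst_word_cons. split.
    + intros (w & r & Hw & Hr & ->). apply IH in Hr. destruct Hr as (v1 & v2 & -> & H1 & H2).
      exists (w ++ v1), v2. rewrite app_assoc. repeat split; auto.
      apply in_subst_word_cons. eauto.
    + intros (v1 & v2 & -> & H1 & H2). apply in_subst_word_cons in H1.
      destruct H1 as (w & r & Hw & Hr & ->).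
      exists w, (r ++ v2). repeat split; auto; [|now rewrite app_assoc].
      apply IH. eauto.
Qed.

Lemma in_subst_pow_succ m x v :
  In v (subst_pow th (S m) x) <-> exists V, In V (subst_pow th m x) /\ In v (subst_word th V).
Proof. unfold subst_pow. simpl. unfold subst_set. rewrite in_flat_map. tauto. Qed.

Lemma subword_refl (x : list A) : subword x x.
Proof. exists [], []. now rewrite app_nil_r. Qed.

Lemma subword_trans (x y z : list A) : subword x y -> subword y z -> subword x z.
Proof.
  intros (p & s & ->) (p' & s' & ->). exists (p' ++ p), (s ++ s').
  now rewrite !app_assoc.
Qed.

Lemma in_language_subword w w' : in_language th w -> subword w' w -> in_language th w'.
Proof.
  intros (x & m & V & HV & Hs) H. exists x, m, V. split; auto. eapply subword_trans; eauto.
Qed.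

Lemma in_language_letter x : in_language th [x].
Proof. exists x, 0, [x]. split; [simpl; auto | apply subword_refl]. Qed.

Lemma language_parent w : in_language th w -> 2 <= length w ->
  exists V u, in_language th V /\ In u (subst_word th V) /\ subword w u.
Proof.
  intros (x & m & V & HV & Hs) Hl. destruct m as [|m].
  - simpl in HV. destruct HV as [<-|[]]. destruct Hs as (p & s & Hs).
    apply (f_equal (@length _)) in Hs. rewrite !length_app in Hs. simpl in Hs. lia.
  - apply in_subst_pow_succ in HV. destruct HV as (V0 & H0 & H1).
    exists V0, V. split; auto. exists x, m, V0. split; auto. apply subword_refl.
Qed.

End RandomSubstitution.

Section RecognisableLengthTwo.

Variable A : Type.
Variable th : rand_subst A.
Hypothesis images_length : forall x w, In w (th x) -> length w = 2.
Hypothesis images_count : forall x, length (th x) = 2.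
Hypothesis images_nodup : forall x, NoDup (th x).
Hypothesis images_disjoint : forall x y w, In w (th x) -> In w (th y) -> x = y.

Lemma subst_word_length u v : In v (subst_word th u) -> length v = 2 * length u.
Proof.
  revert v; induction u as [|z u IH]; intros v H.
  - simpl in H. destruct H as [<-|[]]. reflexivity.
  - apply in_subst_word_cons in H. destruct H as (w & r & Hw & Hr & ->).
    rewrite length_app, (images_length _ _ Hw), (IH _ Hr). simpl. lia.
Qed.

Lemma subst_word_inhabited u : exists v, In v (subst_word th u).
Proof.
  induction u as [|z u [r Hr]]; [exists []; simpl; auto|].
  destruct (th z) as [|w ws] eqn:E.
  { pose proof (images_count z) as Hc. rewrite E in Hc. discriminate. }
  exists (w ++ r). apply in_subst_word_cons. exists w, r. rewrite E. simpl. auto.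
Qed.

Lemma in_language_subst v u : in_language th v -> In u (subst_word th v) -> in_language th u.
Proof.
  intros (x & m & V & HV & (p & s & ->)) Hu.
  destruct (subst_word_inhabited p) as [up Hp]. destruct (subst_word_inhabited s) as [us Hs].
  exists x, (S m), (up ++ u ++ us). split.
  - apply in_subst_pow_succ. exists (p ++ v ++ s). split; auto.
    apply in_subst_word_app. exists up, (u ++ us). repeat split; auto.
    apply in_subst_word_app. eauto.
  - exists up, us. reflexivity.
Qed.

Lemma subst_word_recognisable v v' u :
  In u (subst_word th v) -> In u (subst_word th v') -> v = v'.
Proof.
  intros H H'.
  pose proof (subst_word_length _ _ H) as Hl. pose proof (subst_word_length _ _ H') as Hl'.
  revert v' u H H' Hl Hl'; induction v as [|z v IH];
    intros [|z' v'] u H H' Hl Hl'; simpl in Hl, Hl'; try lia; auto.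
  apply in_subst_word_cons in H. destruct H as (w & r & Hw & Hr & ->).
  apply in_subst_word_cons in H'. destruct H' as (w' & r' & Hw' & Hr' & E).
  apply app_inj_length in E; [|now rewrite (images_length _ _ Hw), (images_length _ _ Hw')].
  destruct E as [<- <-]. rewrite (images_disjoint _ _ _ Hw Hw'). f_equal.
  apply (IH _ r); auto; now apply subst_word_length.
Qed.

Lemma subst_word_nodup v : NoDup (subst_word th v).
Proof.
  induction v as [|z v IH]; [constructor; [simpl; tauto | constructor]|].
  apply NoDup_flat_map_disjoint; auto.
  - intros w _. apply NoDup_map_NoDup_ForallPairs; auto.
    intros r r' _ _ E. eapply app_inv_head; eauto.
  - intros w w' u Hw Hw' Hu Hu'. apply in_map_iff in Hu, Hu'.
    destruct Hu as (r & <- & _). destruct Hu' as (r' & E & _).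
    apply app_inj_length in E; [now destruct E|].
    now rewrite (images_length _ _ Hw), (images_length _ _ Hw').
Qed.

Lemma subst_word_count v : length (subst_word th v) = 2 ^ length v.
Proof.
  induction v as [|z v IH]; [reflexivity|].
  simpl subst_word. rewrite (flat_map_constant_length (c := 2 ^ length v)).
  - rewrite images_count. simpl. lia.
  - intros. rewrite length_map. auto.
Qed.

Lemma trim_left z V p w s :
  In (p ++ w ++ s) (subst_word th (z :: V)) -> 2 <= length p ->
  In (skipn 2 p ++ w ++ s) (subst_word th V).
Proof.
  intros Hu Hp. apply in_subst_word_cons in Hu. destruct Hu as (wz & r & Hwz & Hr & E).
  rewrite <- (firstn_skipn 2 p), <- app_assoc in E.
  apply app_inj_length in E; [now destruct E as [_ <-]|].
  rewrite length_firstn, (images_length _ _ Hwz). lia.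
Qed.

Lemma trim_right z V p w s :
  In (p ++ w ++ s) (subst_word th (V ++ [z])) -> 2 <= length s ->
  In (p ++ w ++ firstn (length s - 2) s) (subst_word th V).
Proof.
  intros Hu Hs. apply in_subst_word_app in Hu. destruct Hu as (r & wz & E & Hr & Hwz).
  pose proof (subst_word_length _ _ Hwz) as Hlz. simpl in Hlz.
  rewrite <- (firstn_skipn (length s - 2) s), (app_assoc w), (app_assoc p) in E.
  apply app_inj_length in E; [now destruct E as [<- _]|].
  apply (f_equal (@length _)) in E. rewrite !length_app, length_firstn, length_skipn in *. lia.
Qed.

Lemma desubstitution n V p w s :
  length p + length s <= n -> in_language th V -> In (p ++ w ++ s) (subst_word th V) ->
  exists V' p' s', in_language th V' /\ In (p' ++ w ++ s') (subst_word th V') /\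
    length p' <= 1 /\ length s' <= 1.
Proof.
  revert V p s; induction n as [|n IH]; intros V p s Hn HV Hu.
  { exists V, p, s. repeat split; auto; lia. }
  assert (HVne : length p + length s >= 2 -> V <> []).
  { intros Hlen ->. simpl in Hu. destruct Hu as [E|[]].
    apply (f_equal (@length _)) in E. rewrite !length_app in E. simpl in E. lia. }
  destruct (Nat.le_gt_cases (length p) 1) as [Hp|Hp];
    [destruct (Nat.le_gt_cases (length s) 1) as [Hs|Hs]|].
  - exists V, p, s. auto.
  - destruct (exists_last (HVne ltac:(lia))) as (V1 & z & ->).
    apply (IH V1 p (firstn (length s - 2) s)).
    + rewrite length_firstn. lia.
    + eapply in_language_subword; [exact HV | exists [], [z]; reflexivity].
    + now apply (trim_right z).
  - destruct V as [|z V1]; [now destruct (HVne ltac:(lia))|].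
    apply (IH V1 (skipn 2 p) s).
    + rewrite length_skipn. lia.
    + eapply in_language_subword; [exact HV | exists [z], []; now rewrite app_nil_r].
    + now apply (trim_left z).
Qed.

(* Counting needs a finite, complete alphabet containing at least one letter. *)
Variable alphabet : list A.
Hypothesis alphabet_complete : forall x, In x alphabet.
Variable some_letter : A.

Definition slice_enumeration (l : nat) (L : list (list A)) : Prop :=
  NoDup L /\ forall w, In w L <-> in_language th w /\ length w = l.

(* The language restricted to length l is finite, being a subset of A^l. *)
Lemma slice_enumeration_exists l : exists L, slice_enumeration l L.
Proof.
  destruct (classical_filter (fun w => in_language th w /\ length w = l)
              (words_of_length alphabet l)) as [L [HN HL]].
  exists L. split; auto. intros w. rewrite HL. split; [tauto|]. intros [Hw Hl].
  repeat split; auto. rewrite <- Hl. now apply in_words_of_length.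
Qed.

Definition slice (l : nat) : list (list A) :=
  proj1_sig (constructive_indefinite_description _ (slice_enumeration_exists l)).

Definition language_count (l : nat) : nat := length (slice l).

Lemma slice_spec l : slice_enumeration l (slice l).
Proof. unfold slice. destruct (constructive_indefinite_description _ _). auto. Qed.

Lemma in_slice l w : In w (slice l) <-> in_language th w /\ length w = l.
Proof. apply slice_spec. Qed.

Lemma language_count_spec l : lang_card th l (language_count l).
Proof. destruct (slice_spec l) as [HN HL]. exists (slice l). auto. Qed.

Lemma count_zero : language_count 0 = 1.
Proof.
  assert (Hincl : incl (slice 0) [[]]).
  { intros w Hw. apply in_slice in Hw.
    destruct w as [|x w]; [simpl; auto | destruct Hw; discriminate]. }
  assert (Hnil : In [] (slice 0)).
  { apply in_slice. split; [|reflexivity].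
    apply (in_language_subword _ _ [some_letter]);
      [apply in_language_letter | exists [], [some_letter]; auto]. }
  pose proof (NoDup_incl_length (proj1 (slice_spec 0)) Hincl). unfold language_count.
  destruct (slice 0); [destruct Hnil | simpl in *; lia].
Qed.

Lemma count_one : 1 <= language_count 1.
Proof.
  assert (Hin : In [some_letter] (slice 1))
    by (apply in_slice; split; [apply in_language_letter | reflexivity]).
  unfold language_count. destruct (slice 1); [destruct Hin | simpl; lia].
Qed.

(* Every legal word of length l+1 is a legal word of length l followed by a letter. *)
Lemma count_succ l : language_count (S l) <= length alphabet * language_count l.
Proof.
  assert (Hincl : incl (slice (S l))
                       (flat_map (fun v => map (fun x => v ++ [x]) alphabet) (slice l))).
  { intros w Hw. apply in_slice in Hw. destruct Hw as [Hw Hl].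
    destruct (exists_last (l := w) ltac:(now intros ->)) as (v & z & ->).
    rewrite length_app in Hl. simpl in Hl.
    apply in_flat_map. exists v. split.
    - apply in_slice. split; [|lia].
      eapply in_language_subword; [exact Hw | exists [], [z]; reflexivity].
    - apply in_map_iff. eauto. }
  pose proof (NoDup_incl_length (proj1 (slice_spec (S l))) Hincl) as H.
  rewrite (flat_map_constant_length (c := length alphabet)) in H by (intros; apply length_map).
  unfold language_count. lia.
Qed.

(* The realisations of distinct legal words of length k are disjoint sets of 2^k legal
   words of length 2k. *)
Lemma count_double k : 2 ^ k * language_count k <= language_count (2 * k).
Proof.
  destruct (slice_spec k) as [HN _].
  assert (Hnodup : NoDup (flat_map (subst_word th) (slice k))).
  { apply NoDup_flat_map_disjoint; auto.
    - intros; apply subst_word_nodup.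
    - intros v v' u _ _ Hu Hu'. eapply subst_word_recognisable; eauto. }
  assert (Hincl : incl (flat_map (subst_word th) (slice k)) (slice (2 * k))).
  { intros u Hu. apply in_flat_map in Hu. destruct Hu as (v & Hv & Hu). apply in_slice in Hv.
    apply in_slice. split; [eapply in_language_subst; [apply Hv | exact Hu]|].
    rewrite (subst_word_length _ _ Hu). f_equal; tauto. }
  pose proof (NoDup_incl_length Hnodup Hincl) as H.
  rewrite (flat_map_constant_length (c := 2 ^ k)) in H.
  - unfold language_count. lia.
  - intros v Hv. apply in_slice in Hv. rewrite subst_word_count. f_equal; tauto.
Qed.

Definition windows (l : nat) (u : list A) : list (list A) := [firstn l u; firstn l (tl u)].

(* Every legal word of length l >= 2 is a window of a realisation of a legal word of
   length h = l/2 or h+1; this is where desubstitution is used. *)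
Lemma count_split l : 2 <= l ->
  language_count l <= 2 ^ S (l / 2) * language_count (l / 2) +
                      2 ^ S (S (l / 2)) * language_count (S (l / 2)).
Proof.
  intros Hl. set (h := l / 2).
  assert (Hh : 2 * h <= l <= 2 * h + 1).
  { pose proof (Nat.div_mod l 2 ltac:(lia)). pose proof (Nat.mod_upper_bound l 2 ltac:(lia)).
    unfold h. lia. }
  set (F := fun v => flat_map (windows l) (subst_word th v)).
  assert (Hincl : incl (slice l) (flat_map F (slice h ++ slice (S h)))).
  { intros w Hw. apply in_slice in Hw. destruct Hw as [Hw Hwl].
    destruct (language_parent _ _ _ Hw ltac:(lia)) as (V & u & HV & Hu & (p & s & ->)).
    destruct (desubstitution (length p + length s) V p w s (le_n _) HV Hu)
      as (V' & p' & s' & HV' & Hu' & Hp' & Hs').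
    pose proof (subst_word_length _ _ Hu') as Hlen. rewrite !length_app in Hlen.
    apply in_flat_map. exists V'. split.
    - apply in_or_app.
      destruct (Nat.eq_dec (length V') h); [left | right]; apply in_slice; split; auto; lia.
    - apply in_flat_map. exists (p' ++ w ++ s'). split; auto.
      assert (Hw_prefix : firstn l (w ++ s') = w)
        by (now rewrite firstn_app, <- Hwl, Nat.sub_diag, firstn_all, app_nil_r).
      destruct p' as [|x [|y p']]; simpl in Hp' |- *; [left | right; left | lia]; auto. }
  assert (HF : forall k, forall v, In v (slice k) -> length (F v) = 2 * 2 ^ k).
  { intros k v Hv. apply in_slice in Hv. unfold F.
    rewrite (flat_map_constant_length (c := 2)) by reflexivity.
    rewrite subst_word_count. destruct Hv as [_ ->]. lia. }
  pose proof (NoDup_incl_length (proj1 (slice_spec l)) Hincl) as H.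
  rewrite flat_map_app, length_app, (flat_map_constant_length _ _ (HF h)),
    (flat_map_constant_length _ _ (HF (S h))) in H.
  unfold language_count. rewrite !Nat.pow_succ_r' in *. lia.
Qed.

End RecognisableLengthTwo.

(* The polynomial inequality that closes the induction in [growth_upper]. *)
Lemma poly_quintic h : 6 <= h -> 10 * (h + 2) ^ 5 <= (2 * h + 1) ^ 5.
Proof.
  intros Hh.
  assert (H : (8 * (h + 2)) ^ 5 <= (5 * (2 * h + 1)) ^ 5) by (apply Nat.pow_le_mono_l; lia).
  rewrite !Nat.pow_mul_l in H. simpl (8 ^ 5) in H. simpl (5 ^ 5) in H. lia.
Qed.

Section GrowthRecursion.

Variable N : nat -> nat.
Hypothesis N_zero : N 0 = 1.
Hypothesis N_one : 1 <= N 1.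
Hypothesis N_succ : forall l, N (S l) <= 4 * N l.
Hypothesis N_double : forall k, 2 ^ k * N k <= N (2 * k).
Hypothesis N_split : forall l, 2 <= l ->
  N l <= 2 ^ S (l / 2) * N (l / 2) + 2 ^ S (S (l / 2)) * N (S (l / 2)).

Lemma growth_crude l : N l <= 4 ^ l.
Proof.
  induction l as [|l IH]; [rewrite N_zero; reflexivity|].
  rewrite Nat.pow_succ_r'. apply (Nat.le_trans _ _ _ (N_succ l)), Nat.mul_le_mono_l, IH.
Qed.

Lemma lower_double k c : 2 ^ k <= N k * c -> 2 ^ (2 * k) <= N (2 * k) * c.
Proof.
  intros H. rewrite Nat.pow_mul_r, Nat.pow_2_r, Nat.pow_mul_l.
  apply Nat.le_trans with (2 ^ k * (N k * c)); [now apply Nat.mul_le_mono_l|].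
  rewrite Nat.mul_assoc. apply Nat.mul_le_mono_r, N_double.
Qed.

(* Even lengths come from [lower_double]; an odd length 2k+3 is bounded through 2k+4. *)
Lemma growth_lower l : 2 ^ l <= N l * (l + 1) ^ 3.
Proof.
  induction l as [l IH] using (well_founded_induction lt_wf).
  destruct (Nat.Even_or_Odd l) as [[k ->]|[k ->]].
  - destruct k as [|k]; [simpl; rewrite N_zero; simpl; lia|].
    apply lower_double. apply Nat.le_trans with (N (S k) * (S k + 1) ^ 3); [apply IH; lia|].
    apply Nat.mul_le_mono_l, Nat.pow_le_mono_l. lia.
  - destruct k as [|k]; [simpl; lia|].
    assert (Heven : 2 ^ (2 * S (S k)) <= N (2 * S (S k)) * (S k + 2) ^ 3).
    { apply lower_double. replace (S k + 2) with (S (S k) + 1) by lia. apply IH. lia. }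
    replace (2 * S (S k)) with (S (2 * S k + 1)) in Heven by lia.
    pose proof (N_succ (2 * S k + 1)) as Hsucc.
    assert (Hcube : 2 * (S k + 2) ^ 3 <= (2 * S k + 1 + 1) ^ 3).
    { replace (2 * S k + 1 + 1) with (2 * (S k + 1)) by lia. rewrite Nat.pow_mul_l. simpl. nia. }
    rewrite Nat.pow_succ_r' in Heven. nia.
Qed.

(* For l > 12 the splitting estimate at h = l/2 closes the induction. *)
Lemma growth_upper l : N l <= 4096 * 2 ^ l * (l + 1) ^ 5.
Proof.
  clear N_one N_double.
  induction l as [l IH] using (well_founded_induction lt_wf).
  destruct (Nat.le_gt_cases l 12) as [Hsmall|Hlarge].
  - (* small lengths: the crude bound 4^l = 2^l 2^l suffices *)
    assert (Hpos : 1 <= (l + 1) ^ 5) by (apply Nat.le_succ_l, Nat.neq_0_lt_0, Nat.pow_nonzero; lia).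
    assert (H2l : 2 ^ l <= 4096) by (apply (Nat.pow_le_mono_r 2 l 12); lia).
    pose proof (growth_crude l) as Hcrude.
    replace (4 ^ l) with (2 ^ l * 2 ^ l) in Hcrude by (rewrite <- Nat.pow_mul_l; reflexivity).
    nia.
  -
    set (h := l / 2).
    assert (Hl : 2 * h <= l <= 2 * h + 1).
    { pose proof (Nat.div_mod l 2 ltac:(lia)). pose proof (Nat.mod_upper_bound l 2 ltac:(lia)).
      unfold h. lia. }
    pose proof (N_split l ltac:(lia)) as Hsplit. fold h in Hsplit.
    pose proof (IH h ltac:(lia)) as IHh. pose proof (IH (S h) ltac:(lia)) as IHSh.
    pose proof (poly_quintic h ltac:(lia)) as Hpoly.
    assert (Hmono : (h + 1) ^ 5 <= (h + 2) ^ 5) by (apply Nat.pow_le_mono_l; lia).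
    assert (Hlen : (2 * h + 1) ^ 5 <= (l + 1) ^ 5) by (apply Nat.pow_le_mono_l; lia).
    assert (Hexp : 2 ^ h * 2 ^ h <= 2 ^ l)
      by (rewrite <- Nat.pow_add_r; apply Nat.pow_le_mono_r; lia).
    replace (S h + 1) with (h + 2) in IHSh by lia.
    rewrite !Nat.pow_succ_r' in Hsplit, IHSh.
    set (X := 2 ^ h) in *. set (Y := (h + 2) ^ 5) in *.
    assert (Hlow_half : 2 * X * N h <= 2 * X * (4096 * X * Y)).
    { apply Nat.mul_le_mono_l, (Nat.le_trans _ _ _ IHh), Nat.mul_le_mono_l, Hmono. }
    assert (Hhigh_half : 2 * (2 * X) * N (S h) <= 2 * (2 * X) * (4096 * (2 * X) * Y))
      by (apply Nat.mul_le_mono_l, IHSh).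
    assert (Hsum : N l <= 4096 * (X * X) * (10 * Y)) by lia.
    rewrite <- Nat.mul_assoc in Hsum |- *.
    apply (Nat.le_trans _ _ _ Hsum), Nat.mul_le_mono_l, Nat.mul_le_mono; lia.
Qed.

End GrowthRecursion.

Open Scope R_scope.

Lemma error_term_vanishes (A B : R) :
  is_lim_seq (fun n => (A + B * ln (INR n)) / INR n) 0.
Proof.
  assert (log_ratio : is_lim_seq (fun n => ln (INR n) / INR n) 0).
  { apply (is_lim_comp_seq (fun y => ln y / y) INR p_infty 0).
    - exact is_lim_div_ln_p.
    - exists 0%nat; intros; discriminate.
    - exact is_lim_seq_INR. }
  assert (inverse : is_lim_seq (fun n => / INR n) 0).
  { apply (is_lim_seq_inv INR p_infty); [exact is_lim_seq_INR | discriminate]. }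
  pose proof (is_lim_seq_plus' _ _ _ _ (is_lim_seq_scal_l _ A _ inverse)
                (is_lim_seq_scal_l _ B _ log_ratio)) as H.
  simpl in H. rewrite !Rmult_0_r, Rplus_0_r in H.
  apply is_lim_seq_ext with (2 := H). intros n. unfold Rdiv. ring.
Qed.

Lemma log_bounds (N : nat -> nat) (r K p q l : nat) :
  (1 <= r)%nat -> (1 <= l)%nat ->
  (r ^ l <= N l * (l + 1) ^ p)%nat -> (N l <= K * r ^ l * (l + 1) ^ q)%nat ->
  INR l * ln (INR r) - INR p * ln (INR l + 1) <= ln (INR (N l)) <=
  ln (INR K) + INR l * ln (INR r) + INR q * ln (INR l + 1).
Proof.
  intros Hr Hl Hlow Hup.
  apply le_INR in Hlow, Hup. rewrite mult_INR, !pow_INR, plus_INR in Hlow.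
  rewrite !mult_INR, !pow_INR, plus_INR in Hup. simpl INR in Hlow, Hup.
  apply (le_INR 1) in Hl, Hr. simpl INR in Hl, Hr.
  assert (0 < INR r ^ l) by (apply pow_lt; lra).
  assert (0 < (INR l + 1) ^ p) by (apply pow_lt; lra).
  assert (0 < (INR l + 1) ^ q) by (apply pow_lt; lra).
  assert (0 < INR (N l)) by (apply (Rmult_lt_reg_r ((INR l + 1) ^ p)); lra).
  assert (0 < INR K) by (apply (Rmult_lt_reg_r (INR r ^ l * (INR l + 1) ^ q)); nra).
  split.
  - apply ln_le in Hlow; [|lra]. rewrite ln_mult, !ln_pow in Hlow by lra. lra.
  - apply ln_le in Hup; [|lra].
    rewrite !ln_mult, !ln_pow in Hup by (try apply Rmult_lt_0_compat; lra). lra.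
Qed.

(* A sequence squeezed between r^l/(l+1)^p and K r^l (l+1)^q has exponential growth
   rate ln r: the relative error of (1/l) ln N(l) is O((ln l)/l). *)
Lemma rate_of_poly_bounds (N : nat -> nat) (r K p q : nat) :
  (1 <= r)%nat ->
  (forall l, r ^ l <= N l * (l + 1) ^ p)%nat ->
  (forall l, N l <= K * r ^ l * (l + 1) ^ q)%nat ->
  Un_cv (fun l => ln (INR (N l)) / INR l) (ln (INR r)).
Proof.
  intros Hr Hlow Hup.
  assert (HK : 0 <= ln (INR K)).
  { pose proof (Hlow 0%nat). pose proof (Hup 0%nat).
    rewrite Nat.pow_0_r, Nat.add_0_l, !Nat.pow_1_l, !Nat.mul_1_r in *.
    rewrite <- ln_1. apply ln_le; [lra|]. apply (le_INR 1). lia. }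
  set (B := INR (p + q)).
  set (err := fun n => (ln (INR K) + B * ln 2 + B * ln (INR n)) / INR n).
  apply is_lim_seq_Reals.
  apply is_lim_seq_le_le_loc
    with (u := fun n => ln (INR r) - err n) (w := fun n => ln (INR r) + err n).
  - exists 1%nat. intros l Hl.
    destruct (log_bounds N r K p q l Hr Hl (Hlow l) (Hup l)) as [Hlo Hhi].
    apply (le_INR 1) in Hl. simpl INR in Hl.
    assert (Hln : 0 <= ln (INR l)) by (rewrite <- ln_1; apply ln_le; lra).
    assert (Hln1 : 0 <= ln (INR l + 1)) by (rewrite <- ln_1; apply ln_le; lra).
    assert (Hlog_succ : ln (INR l + 1) <= ln 2 + ln (INR l)).
    { rewrite <- ln_mult by lra. apply ln_le; lra. }
    assert (Hp : 0 <= INR p) by apply pos_INR. assert (Hq : 0 <= INR q) by apply pos_INR.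
    assert (HB : B = INR p + INR q) by apply plus_INR.
    (* [ln N(l) - l ln r] lies within [l * err l] of zero *)
    assert (Hdev : INR p * ln (INR l + 1) <= ln (INR K) + B * ln 2 + B * ln (INR l) /\
                   ln (INR K) + INR q * ln (INR l + 1) <= ln (INR K) + B * ln 2 + B * ln (INR l)).
    { pose proof (Rmult_le_compat_l _ _ _ Hp Hlog_succ).
      pose proof (Rmult_le_compat_l _ _ _ Hq Hlog_succ).
      pose proof (Rmult_le_pos _ _ Hp Hln). pose proof (Rmult_le_pos _ _ Hq Hln).
      assert (Hln2 : 0 <= ln 2) by (rewrite <- ln_1; apply ln_le; lra).
      pose proof (Rmult_le_pos _ _ Hp Hln2). pose proof (Rmult_le_pos _ _ Hq Hln2).
      rewrite HB. split; lra. }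
    assert (Hdiv : forall x y, x <= y -> x / INR l <= y / INR l)
      by (intros; apply Rmult_le_compat_r; [apply Rlt_le, Rinv_0_lt_compat; lra | lra]).
    unfold err. replace (ln (INR r)) with (INR l * ln (INR r) / INR l) by (field; lra).
    split; unfold Rminus; rewrite <- ?Rdiv_opp_l, <- Rdiv_plus_distr; apply Hdiv; lra.
  - pose proof (is_lim_seq_minus' _ _ _ _ (is_lim_seq_const (ln (INR r)))
                  (error_term_vanishes (ln (INR K) + B * ln 2) B)) as H.
    rewrite Rminus_0_r in H. exact H.
  - pose proof (is_lim_seq_plus' _ _ _ _ (is_lim_seq_const (ln (INR r)))
                  (error_term_vanishes (ln (INR K) + B * ln 2) B)) as H.
    rewrite Rplus_0_r in H. exact H.
Qed.

Definition abcd_alphabet : list abcd := [a; b; c; d].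

Lemma abcd_alphabet_complete x : In x abcd_alphabet.
Proof. destruct x; simpl; auto. Qed.

Lemma theta_images_length x w : In w (theta x) -> length w = 2%nat.
Proof. destruct x; simpl; intros [<-|[<-|[]]]; reflexivity. Qed.

Lemma theta_images_count x : length (theta x) = 2%nat.
Proof. destruct x; reflexivity. Qed.

Lemma theta_images_nodup x : NoDup (theta x).
Proof. destruct x; repeat constructor; simpl; intuition discriminate. Qed.

Lemma theta_images_disjoint x y w : In w (theta x) -> In w (theta y) -> x = y.
Proof.
  destruct x, y; simpl; intros [<-|[<-|[]]] H; try reflexivity;
  repeat (destruct H as [H|H]; [discriminate H|]); destruct H.
Qed.

Definition theta_count : nat -> nat :=
  language_count abcd theta abcd_alphabet abcd_alphabet_complete.

Lemma theta_count_zero : theta_count 0 = 1%nat.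
Proof. exact (count_zero _ _ _ _ a). Qed.

Lemma theta_count_one : (1 <= theta_count 1)%nat.
Proof. exact (count_one _ _ _ _ a). Qed.

Lemma theta_count_succ l : (theta_count (S l) <= 4 * theta_count l)%nat.
Proof. exact (count_succ _ _ _ _ l). Qed.

Lemma theta_count_double k : (2 ^ k * theta_count k <= theta_count (2 * k))%nat.
Proof.
  exact (count_double _ _ theta_images_length theta_images_count theta_images_nodup
           theta_images_disjoint _ _ k).
Qed.

Lemma theta_count_split l : (2 <= l)%nat ->
  (theta_count l <= 2 ^ S (l / 2) * theta_count (l / 2) +
                    2 ^ S (S (l / 2)) * theta_count (S (l / 2)))%nat.
Proof. exact (count_split _ _ theta_images_length theta_images_count _ _ l). Qed.

Theorem mainTheorem12 : has_top_entropy theta (ln 2).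
Proof.
  exists theta_count. split; [intros l; apply language_count_spec|].
  replace 2 with (INR 2) by (simpl; lra).
  apply (rate_of_poly_bounds theta_count 2 4096 3 5); [lia | intros l | intros l].
  - exact (growth_lower _ theta_count_zero theta_count_one theta_count_succ theta_count_double l).
  - exact (growth_upper _ theta_count_zero theta_count_succ theta_count_split l).
Qed.
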